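(* Let $n\ge3$, let $h$ be a hermitian form on $\mathbb{C}^n$ of signature $(n-1,1)$, let $r\ge5$ be odd and let $x=(L_1,\dots,L_r)$ be a semi-stable $r$-tuple of isotropic lines. Then there exists $k\in\{1,\dots,r\}$ with the following property: for all $i,j\in\{1,\dots,r\}$ such that the lines $L_i,L_j,L_k$ are pairwise distinct, there exists a derangement $\sigma$ of $\{1,\dots,r\}$ such that (1) $\sigma(i)=j$, $\sigma(j)=k$, $\sigma(k)=i$; (2) the restriction of $\sigma$ to $\{1,\dots,r\}\smallsetminus\{i,j,k\}$ is a derangement of order $2$; (3) $s_\sigma(x)\ne0$.
   Context: A derangement is a fixed-point-free permutation. $s_\sigma(x)=\prod_{l=1}^r h(v_l,v_{\sigma(l)})$ with $v_l$ a generator of $L_l$ ($h$ linear in the second variable). The $r$-tuple of isotropic lines is semi-stable if the $r$-tuple of flags $(L_l,L_l^\perp)$ is semi-stable for the diagonal $\mathrm{SL}_n(\mathbb{C})$-action on the $r$-th power of the variety of line-hyperplane flags, linearized via $(L,H)\mapsto(L,H^\perp)\in\mathbb{P}(\mathbb{C}^n)\times\mathbb{P}((\mathbb{C}^n)^\vee)$ and $\bigotimes\mathrm{pr}^*(\mathcal{O}(1)\boxtimes\mathcal{O}(1))$ (some invariant section of a positive tensor power does not vanish). *)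

From HB Require Import structures.
From mathcomp Require Import all_boot all_order all_algebra all_fingroup.
From mathcomp Require Import reals complex.
From mathcomp Require Import mpoly.
Set Implicit Arguments. Unset Strict Implicit. Unset Printing Implicit Defensive.
Import Order.TTheory GRing.Theory Num.Theory.
Local Open Scope ring_scope.

Section Defs.
Variable C : numClosedFieldType.

Definition herm {n} (H : 'M[C]_n) (v w : 'rV[C]_n) : C :=
  ((map_mx Num.conj v) *m H *m w^T) 0 0.

Definition is_hermitian {n} (H : 'M[C]_n) : Prop := H^T = map_mx Num.conj H.

Definition signature_n1_1 {n} (H : 'M[C]_n.+1) : Prop :=
  exists P : 'M[C]_n.+1, P \in unitmx /\
    (map_mx Num.conj P)^T *m H *m P =
      diag_mx (\row_(a < n.+1) (if a == ord_max then -1 else 1)).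

(* coefficient row of the functional w |-> h(v,w), which spans (v^perp)^perp *)
Definition hfun {n} (H : 'M[C]_n) (v : 'rV[C]_n) : 'rV[C]_n :=
  map_mx Num.conj v *m H.

(* coordinates of (v_1,phi_1,...,v_r,phi_r) as a point of C^(r*(n+n)) *)
Definition coords {r n} (v phi : 'I_r -> 'rV[C]_n) : 'I_(r * (n + n)) -> C :=
  fun k => mxvec (\matrix_(l < r) row_mx (v l) (phi l)) 0 k.

Definition multihom {r n} (m : nat) (p : {mpoly C[r * (n + n)]}) : Prop :=
  forall mon, mon \in msupp p -> forall l : 'I_r,
    (\sum_(a < n) mon (mxvec_index l (lshift n a)) = m)%N /\
    (\sum_(a < n) mon (mxvec_index l (rshift n a)) = m)%N.

(* SL_n-invariance for g.v = g v and g.phi = phi o g^-1 *)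
Definition SL_invariant {r n} (p : {mpoly C[r * (n + n)]}) : Prop :=
  forall g : 'M[C]_n, \det g = 1 -> forall v phi : 'I_r -> 'rV[C]_n,
    p.@[coords (fun l => v l *m g^T) (fun l => phi l *m invmx g)] =
    p.@[coords v phi].

(* the r-tuple of flags (L_l, L_l^perp), L_l = <v_l>, is GIT semi-stable for
   the linearization O(1)[x]O(1) on P(C^n) x P((C^n)^v) *)
Definition semistable {r n} (H : 'M[C]_n) (v : 'I_r -> 'rV[C]_n) : Prop :=
  exists m : nat, (0 < m)%N /\ exists p : {mpoly C[r * (n + n)]},
    multihom m p /\ SL_invariant p /\ p.@[coords v (fun l => hfun H (v l))] != 0.

Definition isotropic_line {n} (H : 'M[C]_n) (v : 'rV[C]_n) : Prop :=
  v != 0 /\ herm H v v = 0.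

Definition derangement {r} (s : {perm 'I_r}) : Prop := forall l, s l != l.

Definition s_sigma {r n} (H : 'M[C]_n) (v : 'I_r -> 'rV[C]_n) (s : {perm 'I_r}) : C :=
  \prod_(l < r) herm H (v l) (v (s l)).

End Defs.

(* Call two indices equivalent when they carry the same line.  Semi-stability
   bounds every equivalence class S by r/2, hence by (r-1)/2 as r is odd: if
   the class of a line E were larger, pick u isotropic with h(E,u) = 1 and let
   the one-parameter subgroup of SL_n scale E by t, u by t^-1 and fix the
   h-orthogonal complement of E and u.  The flags of S then have weight t and
   all others weight t^-1, so an invariant p of degree m satisfies
   p(x) = t^(2m(#S - #S^c)) Q(t) for a polynomial Q, and p(x) = 0.
   Take k in a largest class.  After removing a 3-cycle (i j k) of pairwise
   distinct lines, the remaining even number of indices still has no class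
   exceeding half of them, so they can be matched into pairs carrying distinct
   lines.  Finally two isotropic lines of a form of signature (n-1,1) are
   h-orthogonal only if they coincide, so no factor of s_sigma vanishes. *)

From HB Require Import structures.
From mathcomp Require Import all_boot all_order all_algebra all_fingroup.
From mathcomp Require Import reals complex.
From mathcomp Require Import mpoly.
From mathcomp Require Import ring zify.
Set Implicit Arguments. Unset Strict Implicit. Unset Printing Implicit Defensive.
Import Order.TTheory GRing.Theory Num.Theory.

Section InequivalentMatching.
Variables (T : finType) (e : rel T).
Hypotheses (e_refl : reflexive e) (e_ltrans : left_transitive e).

Lemma e_sym x y : e x y = e y x.
Proof. by apply/idP/idP => exy; rewrite -(e_ltrans exy) e_refl. Qed.

Definition eclass (A : {set T}) x := [set y in A | e x y].

Definition ematching (A : {set T}) (f : T -> T) :=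
  {in A, forall x, [/\ f x \in A, f (f x) = x & ~~ e x (f x)]}.

Lemma eclass_eq (A : {set T}) x y : e x y -> eclass A x = eclass A y.
Proof. by move=> exy; apply/setP => z; rewrite !inE (e_ltrans exy). Qed.

Lemma card_eclassD1 (A : {set T}) a x :
  a \in A -> #|eclass A x| = e x a + #|eclass (A :\ a) x|.
Proof.
move=> aA; rewrite (cardsD1 a) inE aA; congr (_ + _).
by apply: eq_card => y; rewrite !inE andbA.
Qed.

Lemma double_leq_even m c : ~~ odd m -> c.*2 <= m.+1 -> c.*2 <= m.
Proof.
move=> m_even; rewrite leq_eqVlt ltnS => /predU1P[m1 | //].
by have := odd_double c; rewrite m1 /= m_even.
Qed.

Lemma double_card_eclass_le (A B : {set T}) a x :
  a \in A -> (forall y, y \in A -> #|eclass A y| <= #|eclass A a|) ->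
  ~~ e a x -> B \subset A -> (forall b, b \in B -> ~~ e a b && ~~ e x b) ->
  #|eclass A x|.*2 + #|B| <= #|A|.
Proof.
move=> aA a_max nax sBA hB.
have le_xa : #|eclass A x| <= #|eclass A a|.
  have [->|[y]] := set_0Vmem (eclass A x); first by rewrite cards0.
  by rewrite inE => /andP[yA exy]; rewrite (eclass_eq A exy) a_max.
have dis_ax : eclass A a :&: eclass A x = set0.
  apply/setP => y; rewrite !inE; apply/negP => /andP[/andP[_ eay] /andP[_ exy]].
  by move: nax; rewrite (e_ltrans eay) e_sym exy.
have dis_B : (eclass A a :|: eclass A x) :&: B = set0.
  apply/setP => y; rewrite !inE; apply/negP => /andP[/orP[] /andP[_ ey] /hB ].
    by rewrite ey.
  by rewrite ey andbF.
have sub : (eclass A a :|: eclass A x) :|: B \subset A.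
  by rewrite !subUset sBA andbT; apply/andP; split;
    apply/subsetP => y; rewrite inE => /andP[].
move: (subset_leq_card sub); rewrite !cardsU dis_ax dis_B cards0 !subn0.
by rewrite -addnn; lia.
Qed.

Lemma inequiv_eqF x y : ~~ e x y -> (x == y) = false.
Proof. by move=> nxy; apply/negbTE; apply: contraNneq nxy => ->; rewrite e_refl. Qed.

Lemma double_card_eclassD2_le (A : {set T}) a b :
  ~~ odd #|A| -> (forall x, #|eclass A x|.*2 <= #|A|) ->
  a \in A -> (forall y, y \in A -> #|eclass A y| <= #|eclass A a|) ->
  b \in A -> ~~ e a b ->
  forall x, #|eclass (A :\ a :\ b) x|.*2 <= #|A :\ a :\ b|.
Proof.
move=> A_even A_bound aA a_max bA nab x.
have bAa : b \in A :\ a by rewrite !inE bA andbT; apply: contraNneq nab => ->.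
have cardA : #|A| = #|A :\ a :\ b|.+2 by rewrite (cardsD1 a A) aA (cardsD1 b (A :\ a)) bAa.
have := A_bound x; rewrite cardA (card_eclassD1 x aA) (card_eclassD1 x bAa).
have [exa | nxa] := boolP (e x a); first by rewrite (e_ltrans exa) (negbTE nab) /=; lia.
have [exb | nxb] := boolP (e x b); first by rewrite /=; lia.
move=> _ /=; apply: double_leq_even; first by move: A_even; rewrite cardA /= negbK.
have := @double_card_eclass_le A [set b] a x aA a_max.
rewrite (card_eclassD1 x aA) (card_eclassD1 x bAa) (negbTE nxa) (negbTE nxb) cards1 cardA.
rewrite sub1set bA addn1 ltnS; apply=> //; first by rewrite e_sym.
by move=> y; rewrite inE => /eqP->; rewrite nab nxb.
Qed.

Lemma ematching_exists (A : {set T}) :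
  ~~ odd #|A| -> (forall x, #|eclass A x|.*2 <= #|A|) ->
  exists f, ematching A f.
Proof.
have [N] := ubnP #|A|; elim: N A => // N IH A ltAN A_even A_bound.
have [-> | [a0 a0A]] := set_0Vmem A; first by exists id => x; rewrite inE.
have [a aA a_max] := @arg_maxnP T a0 (fun y => y \in A) (fun y => #|eclass A y|) a0A.
have [b bA nab] : exists2 b, b \in A & ~~ e a b.
  apply/exists_inP; rewrite -negb_forall_in; apply/forall_inP => A_a.
  have eqA : eclass A a = A by apply/setP => y; rewrite inE andb_idr //; apply: A_a.
  have A_pos : 0 < #|A| by apply/card_gt0P; exists a0.
  by move: (A_bound a); rewrite eqA -addnn; lia.
have nba : ~~ e b a by rewrite e_sym.
have [f f_match] : exists f, ematching (A :\ a :\ b) f.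
  have cardA : #|A| = #|A :\ a :\ b|.+2.
    by rewrite (cardsD1 a A) aA (cardsD1 b (A :\ a)) !inE (inequiv_eqF nba) bA.
  apply: IH; first by move: ltAN; rewrite cardA; lia.
    by move: A_even; rewrite cardA /= negbK.
  exact: double_card_eclassD2_le.
exists (fun x => if x == a then b else if x == b then a else f x) => x xA.
have [-> | xa] := eqVneq x a; first by rewrite eqxx (inequiv_eqF nba) bA.
have [-> | xb] := eqVneq x b; first by rewrite eqxx aA e_sym.
have xA' : x \in A :\ a :\ b by rewrite !inE xa xb.
have [+ ffx nefx] := f_match x xA'.
by rewrite !inE => /and3P[/negbTE-> /negbTE-> fxA]; rewrite ffx.
Qed.

Section ThreeCycle.
Variables i j k : T.
Hypotheses (nij : ~~ e i j) (njk : ~~ e j k) (nik : ~~ e i k).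

Let A := [set: T] :\ i :\ j :\ k.

Let jA : j \in [set: T] :\ i.
Proof. by rewrite !inE inequiv_eqF // e_sym. Qed.

Let kA : k \in [set: T] :\ i :\ j.
Proof. by rewrite !inE !inequiv_eqF // e_sym. Qed.

Lemma ematching_exists_D3 :
  odd #|T| -> (forall x, #|eclass [set: T] x|.*2 < #|T|) ->
  (forall y, #|eclass [set: T] y| <= #|eclass [set: T] k|) ->
  exists f, ematching A f.
Proof.
move=> T_odd T_bound k_max.
have cardT : #|T| = #|A|.+3.
  by rewrite -cardsT (cardsD1 i) in_setT (cardsD1 j _) jA (cardsD1 k _) kA.
have A_even : ~~ odd #|A| by move: T_odd; rewrite cardT /= negbK.
apply: ematching_exists => // x; have := T_bound x.
rewrite cardT (card_eclassD1 x (in_setT i)) (card_eclassD1 x jA) (card_eclassD1 x kA) -/A.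
case exi: (e x i) => /=; first lia.
case exj: (e x j) => /=; first lia.
case exk: (e x k) => /=; first lia.
move=> _; apply: double_leq_even => //.
have := @double_card_eclass_le [set: T] [set i; j] k x (in_setT k) (fun y _ => k_max y).
rewrite (card_eclassD1 x (in_setT i)) (card_eclassD1 x jA) (card_eclassD1 x kA) -/A.
rewrite exi exj exk cards2 inequiv_eqF // cardsT cardT /= addn2 ltnS; apply=> //.
  by rewrite e_sym exk.
by move=> b; rewrite !inE => /orP[]/eqP->; rewrite e_sym ?nik ?njk ?exi ?exj.
Qed.

Lemma three_cycle_perm f : ematching A f ->
  exists s : {perm T},
    [/\ [/\ s i = j, s j = k & s k = i],
        forall l, l \notin [:: i; j; k] -> s (s l) = l
      & forall l, ~~ e l (s l)].
Proof.
move=> fA.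
pose F l := if l == i then j else if l == j then k else if l == k then i else f l.
have [Fi Fj Fk] : [/\ F i = j, F j = k & F k = i].
  by rewrite /F !eqxx !inequiv_eqF // e_sym.
have notin_A l : l \notin [:: i; j; k] -> l \in A.
  by rewrite !inE !negb_or => /and3P[-> -> ->].
have FA l : l \in A -> F l = f l.
  by rewrite /F !inE => /and4P[/negbTE-> /negbTE-> /negbTE-> _].
have FFA l : l \in A -> F (F l) = l.
  by move=> lA; have [flA ffl _] := fA l lA; rewrite (FA l lA) (FA _ flA).
(* [F] is a 3-cycle times an involution, so [F ^ 6 = id]. *)
have F6 l : iter 6 F l = l.
  rewrite !iterSr; case: (boolP (l \in [:: i; j; k])) => [|/notin_A lA].
    by rewrite !inE => /or3P[]/eqP->; rewrite !(Fi, Fj, Fk).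
  by rewrite !FFA.
have F_inj : injective F by apply: (@can_inj _ _ _ (iter 5 F)) => l; rewrite -iterSr.
exists (perm F_inj); split=> [|l /notin_A lA|l]; rewrite ?permE //; first exact: FFA.
case: (boolP (l \in [:: i; j; k])) => [|/notin_A lA]; last by rewrite FA //; case: (fA l lA).
by rewrite !inE => /or3P[]/eqP->; rewrite ?Fi ?Fj ?Fk // e_sym.
Qed.

End ThreeCycle.

Lemma ematching_three_cycle :
  odd #|T| -> (forall x, #|eclass [set: T] x|.*2 < #|T|) ->
  exists k, forall i j, ~~ e i j -> ~~ e j k -> ~~ e i k ->
    exists s : {perm T},
      [/\ [/\ s i = j, s j = k & s k = i],
          forall l, l \notin [:: i; j; k] -> s (s l) = l
        & forall l, ~~ e l (s l)].
Proof.
move=> T_odd T_bound.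
have /card_gt0P[k0 _] : 0 < #|T| by rewrite lt0n; apply: contraTneq T_odd => ->.
have [k _ k_max] := @arg_maxnP T k0 predT (fun y => #|eclass [set: T] y|) isT.
exists k => i j nij njk nik.
have [f fA] := ematching_exists_D3 nij njk nik T_odd T_bound (fun y => k_max y isT).
exact: three_cycle_perm fA.
Qed.

End InequivalentMatching.

Local Open Scope ring_scope.

Section HermitianForm.
Variables (C : numClosedFieldType) (n : nat).
Implicit Types (H P : 'M[C]_n) (x y z : 'rV[C]_n).

Lemma hermDl H x y z : herm H (x + y) z = herm H x z + herm H y z.
Proof. by rewrite /herm map_mxD !mulmxDl mxE. Qed.

Lemma hermZl H a x y : herm H (a *: x) y = a^* * herm H x y.
Proof. by rewrite /herm map_mxZ -!scalemxAl mxE. Qed.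

Lemma hermDr H x y z : herm H x (y + z) = herm H x y + herm H x z.
Proof. by rewrite /herm linearD /= mulmxDr mxE. Qed.

Lemma hermZr H a x y : herm H x (a *: y) = a * herm H x y.
Proof. by rewrite /herm linearZ /= -scalemxAr mxE. Qed.

Lemma hermE H x y : herm H x y = \sum_j \sum_i (x 0 i)^* * H i j * y 0 j.
Proof.
rewrite /herm mxE; apply: eq_bigr => j _; rewrite !mxE big_distrl /=.
by apply: eq_bigr => i _; rewrite !mxE.
Qed.

Lemma herm_sym H x y : is_hermitian H -> herm H y x = (herm H x y)^*.
Proof.
move=> /matrixP hH; rewrite !hermE rmorph_sum exchange_big /=.
apply: eq_bigr => i _; rewrite rmorph_sum; apply: eq_bigr => j _.
by have := hH i j; rewrite !mxE => ->; rewrite !rmorphM /= !conjCK; ring.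
Qed.

Lemma herm_mulmx H P x y :
  herm H (x *m P^T) (y *m P^T) = herm ((map_mx Num.conj P)^T *m H *m P) x y.
Proof. by rewrite /herm map_mxM trmx_mul trmxK map_trmx !mulmxA. Qed.

Lemma herm_diag (d : 'rV[C]_n) x y :
  herm (diag_mx d) x y = \sum_j (x 0 j)^* * d 0 j * y 0 j.
Proof.
rewrite hermE; apply: eq_bigr => j _.
rewrite (bigD1 j) //= big1 ?addr0 => [|i /negPf ij]; rewrite !mxE ?eqxx ?ij //.
by rewrite mulr0n mulr0 mul0r.
Qed.

End HermitianForm.

Section Signature.
Variables (C : numClosedFieldType) (n : nat) (H : 'M[C]_n.+1).
Implicit Types (x y : 'rV[C]_n.+1).

Definition lorentz_mx : 'M[C]_n.+1 :=
  diag_mx (\row_(a < n.+1) (if a == ord_max then -1 else 1)).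

Lemma lorentz_anisotropic x :
  x 0 ord_max = 0 -> herm lorentz_mx x x = 0 -> x = 0.
Proof.
move=> x_last; rewrite herm_diag (bigD1 ord_max) //= x_last mulr0 add0r.
under eq_bigr => j /negPf jm do rewrite mxE jm mulr1 mulrC.
move/psumr_eq0P => /(_ (fun j _ => mul_conjC_ge0 _)) x0.
apply/rowP => j; rewrite mxE; have [-> // | jm] := eqVneq j ord_max.
by apply/eqP; rewrite -mul_conjC_eq0 x0.
Qed.

Lemma signature_normal_form : signature_n1_1 H ->
  exists2 Q, Q \in unitmx & forall x y, herm H x y = herm lorentz_mx (x *m Q) (y *m Q).
Proof.
move=> [P [P_unit PHP]]; exists (invmx P)^T; first by rewrite unitmx_tr unitmx_inv.
have QP (z : 'rV_n.+1) : z = z *m (invmx P)^T *m P^T.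
  by rewrite -mulmxA -trmx_mul mulmxV // trmx1 mulmx1.
by move=> x y; rewrite {1}(QP x) {1}(QP y) herm_mulmx PHP.
Qed.

Lemma normal_form_isotropic_eq0 Q : Q \in unitmx ->
  (forall x y, herm H x y = herm lorentz_mx (x *m Q) (y *m Q)) ->
  forall x, herm H x x = 0 -> (x *m Q) 0 ord_max = 0 -> x = 0.
Proof.
move=> Q_unit hQ x xx0 x_last.
by rewrite -(mulmxK Q_unit x) (lorentz_anisotropic x_last) ?mul0mx // -hQ.
Qed.

Lemma isotropic_orth_eqmx x y : is_hermitian H -> signature_n1_1 H ->
  isotropic_line H x -> isotropic_line H y -> herm H x y = 0 -> (x == y)%MS.
Proof.
move=> hH /signature_normal_form[Q Q_unit hQ] [x0 xx] [y0 yy] xy.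
have iso_eq0 := normal_form_isotropic_eq0 Q_unit hQ.
set a := (x *m Q) 0 ord_max; set b := (y *m Q) 0 ord_max.
have a0 : a != 0 by apply: contraNneq x0 => /(iso_eq0 _ xx)->.
have b0 : b != 0 by apply: contraNneq y0 => /(iso_eq0 _ yy)->.
(* [b x - a y] is isotropic and has last coordinate [0] *)
have bx_ay : b *: x = a *: y.
  apply/eqP; rewrite -subr_eq0 -scaleNr; apply/eqP/iso_eq0.
    have yx : herm H y x = 0 by rewrite herm_sym // xy conjC0.
    by rewrite !hermDl !hermDr !hermZl !hermZr xx yy xy yx !mulr0 !addr0.
  have coordE c d (u w : 'rV[C]_n.+1) :
    (c *: u + d *: w) 0 ord_max = c * u 0 ord_max + d * w 0 ord_max by rewrite !mxE.
  by rewrite mulmxDl -!scalemxAl coordE -/a -/b mulNr mulrC subrr.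
have -> : x = (b^-1 * a) *: y by rewrite -scalerA -bx_ay scalerA mulVf ?scale1r.
by apply/eqmxP; apply: eqmx_scale; rewrite mulf_neq0 ?invr_eq0.
Qed.

Lemma isotropic_exists_dual x : signature_n1_1 H -> isotropic_line H x ->
  exists w, herm H x w = 1.
Proof.
move=> /signature_normal_form[Q Q_unit hQ] [x0 xx].
set z := x *m Q; have z_last : z 0 ord_max != 0.
  by apply: contraNneq x0 => /(normal_form_isotropic_eq0 Q_unit hQ xx)->.
pose w : 'rV_n.+1 := delta_mx 0 ord_max *m invmx Q.
have xw : herm H x w = - (z 0 ord_max)^*.
  rewrite hQ mulmxKV // -/z herm_diag (bigD1 ord_max) //= big1 => [|j /negPf jm].
    by rewrite !mxE !eqxx /= mulr1 mulrN1 addr0.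
  by rewrite !mxE jm andbF mulr0.
by exists ((herm H x w)^-1 *: w); rewrite hermZr mulVf // xw oppr_eq0 conjC_eq0.
Qed.

Lemma isotropic_hyperbolic_partner x : is_hermitian H -> signature_n1_1 H ->
  isotropic_line H x ->
  exists u, [/\ herm H x u = 1, herm H u x = 1 & herm H u u = 0].
Proof.
move=> hH sig x_iso; have [w xw] := isotropic_exists_dual sig x_iso.
have [_ xx] := x_iso; have wx : herm H w x = 1 by rewrite herm_sym // xw conjC1.
pose c := herm H w w / 2%:R.
have c_real : c^* = c by rewrite fmorph_div /= conjC_nat -herm_sym.
exists (w + (- c) *: x); rewrite !hermDl !hermDr !hermZl !hermZr xx xw wx.
split; [by rewrite mulr0 addr0 | by rewrite mulr0 addr0 | ].
by rewrite raddfN /= c_real /c; field.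
Qed.

End Signature.

Lemma det1D_mulmx (R : comNzRingType) n (x : 'cV[R]_n) (y : 'rV[R]_n) :
  \det (1%:M + x *m y) = 1 + (y *m x) 0 0.
Proof.
pose L := block_mx 1%:M 0 y 1%:M : 'M[R]_(n + 1).
pose M := block_mx (1%:M + x *m y) x 0 1%:M : 'M[R]_(n + 1).
pose L' := block_mx 1%:M 0 (- y) 1%:M : 'M[R]_(n + 1).
have LML' : L *m M *m L' = block_mx 1%:M x 0 (1%:M + y *m x).
  rewrite /L /M /L' !mulmx_block !mulmx1 !mul1mx !mul0mx !mulmx0 !addr0 !add0r.
  rewrite ?mulmxDr ?mulmxDl ?mulmx1 ?mulmxN ?mulNmx ?mulmxA mul1mx; congr block_mx.
  - by rewrite addrK.
  - by rewrite [- _ - _]addrC addrACA !subrr addr0.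
  - by rewrite addrC.
move: (congr1 determinant LML'); rewrite !det_mulmx /L /M /L'.
by rewrite det_lblock !det_ublock det_lblock !det1 !mul1r !mulr1 det_mx11 => ->; rewrite !mxE.
Qed.

Section HyperbolicTorus.
Variables (C : fieldType) (n : nat) (E u psi phi : 'rV[C]_n).
Hypotheses (psiE : (psi *m E^T) 0 0 = 1) (psiu : (psi *m u^T) 0 0 = 0).
Hypotheses (phiE : (phi *m E^T) 0 0 = 0) (phiu : (phi *m u^T) 0 0 = 1).

(* The duality hypotheses make [E^T *m psi] and [u^T *m phi] orthogonal
   idempotents, so [hyperbolic_mx] is multiplicative. *)
Definition hyperbolic_mx (a b : C) : 'M[C]_n :=
  1%:M + (a - 1) *: (E^T *m psi) + (b - 1) *: (u^T *m phi).

Let mx11 (M : 'M[C]_1) c : M 0 0 = c -> M = c%:M.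
Proof. by move=> M00; rewrite [M]mx11_scalar M00. Qed.

Lemma hyperbolic_mxM a b a' b' :
  hyperbolic_mx a b *m hyperbolic_mx a' b' = hyperbolic_mx (a * a') (b * b').
Proof.
rewrite /hyperbolic_mx !mulmxDl !mulmxDr !mul1mx !mulmx1 -!scalemxAl -!scalemxAr.
rewrite !mulmxA -!(mulmxA E^T) -!(mulmxA u^T) (mx11 psiE) (mx11 psiu) (mx11 phiE) (mx11 phiu).
rewrite !mul1mx !mul_scalar_mx !scale0r !mulmx0 !scaler0 !addr0.
by apply/matrixP => i j; rewrite !mxE; ring.
Qed.

Lemma hyperbolic_mx1 : hyperbolic_mx 1 1 = 1%:M.
Proof. by rewrite /hyperbolic_mx !subrr !scale0r !addr0. Qed.

Lemma det_hyperbolic_mx a b : \det (hyperbolic_mx a b) = a * b.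
Proof.
rewrite -[a]mulr1 -[b]mul1r -hyperbolic_mxM det_mulmx /hyperbolic_mx !subrr !scale0r !addr0.
by rewrite !scalemxAr !det1D_mulmx -!scalemxAl (mx11 psiE) (mx11 phiu) !mxE eqxx /=; ring.
Qed.

Lemma invmx_hyperbolic_mx a b : a != 0 -> b != 0 ->
  invmx (hyperbolic_mx a b) = hyperbolic_mx a^-1 b^-1.
Proof.
move=> a0 b0; have gV : hyperbolic_mx a b *m hyperbolic_mx a^-1 b^-1 = 1%:M.
  by rewrite hyperbolic_mxM !divff // hyperbolic_mx1.
have [g_unit _] := mulmx1_unit gV.
by rewrite -[RHS]mul1mx -(mulVmx g_unit) -mulmxA gV mulmx1.
Qed.

Lemma row_hyperbolic_mx a b x : x *m (hyperbolic_mx a b)^T =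
  x + ((a - 1) * (x *m psi^T) 0 0) *: E + ((b - 1) * (x *m phi^T) 0 0) *: u.
Proof.
rewrite /hyperbolic_mx !linearD /= !linearZ /= !trmx_mul !trmxK trmx1 mulmx1 !mulmxA.
rewrite [in LHS](mx11_scalar (x *m psi^T)) [in LHS](mx11_scalar (x *m phi^T)).
by rewrite !mul_scalar_mx !scalerA.
Qed.

Lemma col_hyperbolic_mx a b y : y *m hyperbolic_mx a b =
  y + ((a - 1) * (y *m E^T) 0 0) *: psi + ((b - 1) * (y *m u^T) 0 0) *: phi.
Proof.
rewrite /hyperbolic_mx !mulmxDr mulmx1 -!scalemxAr !mulmxA.
rewrite [in LHS](mx11_scalar (y *m E^T)) [in LHS](mx11_scalar (y *m u^T)).
by rewrite !mul_scalar_mx !scalerA.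
Qed.

End HyperbolicTorus.

Lemma horner_mmap_polyC (C : comNzRingType) N (p : {mpoly C[N]}) (Y : 'I_N -> {poly C}) t :
  (mmap polyC Y p).[t] = p.@[fun i => (Y i).[t]].
Proof.
rewrite mevalE horner_sum; apply: eq_bigr => mon _.
by rewrite hornerCM horner_prod; under eq_bigr do rewrite horner_exp.
Qed.

Lemma poly_eq0_of_root_nz (C : numDomainType) (q : {poly C}) :
  (forall t, t != 0 -> q.[t] = 0) -> q = 0.
Proof.
move=> q_root; apply: (@roots_geq_poly_eq0 _ q [seq i.+1%:R | i <- iota 0 (size q)]).
- by apply/allP => _ /mapP[i _ ->]; apply/rootP/q_root; rewrite pnatr_eq0.
- by rewrite map_inj_uniq ?iota_uniq // => i j /eqP; rewrite eqr_nat eqSS => /eqP.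
- by rewrite size_map size_iota.
Qed.

Section Coordinates.
Variables (C : numClosedFieldType) (r n : nat).
Implicit Types (X Y : 'I_r -> 'rV[C]_n).

Lemma coords_lshift X Y l a : coords X Y (mxvec_index l (lshift n a)) = X l 0 a.
Proof. by rewrite /coords mxvecE !mxE (unsplitK (inl _ a)). Qed.

Lemma coords_rshift X Y l a : coords X Y (mxvec_index l (rshift n a)) = Y l 0 a.
Proof. by rewrite /coords mxvecE !mxE (unsplitK (inr _ a)). Qed.

Lemma coords_index_ind (P : 'I_(r * (n + n)) -> Prop) :
  (forall l a, P (mxvec_index l (lshift n a))) ->
  (forall l a, P (mxvec_index l (rshift n a))) -> forall k, P k.
Proof.
move=> Pl Pr k; case/mxvec_indexP: k => l a.
by case: (split_ordP a) => b ->; [apply: Pl | apply: Pr].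
Qed.

Lemma eq_coords X X' Y Y' : X =1 X' -> Y =1 Y' -> coords X Y =1 coords X' Y'.
Proof.
move=> eX eY; apply: coords_index_ind => l a.
  by rewrite !coords_lshift eX.
by rewrite !coords_rshift eY.
Qed.

Lemma coords_poly2 (A B D A' B' D' : 'I_r -> 'rV[C]_n) t k :
  coords (fun l => A l + t *: B l + t ^+ 2 *: D l)
         (fun l => A' l + t *: B' l + t ^+ 2 *: D' l) k
  = coords A A' k + t * coords B B' k + t ^+ 2 * coords D D' k.
Proof.
move: k; apply: coords_index_ind => l a.
  by rewrite !coords_lshift !mxE.
by rewrite !coords_rshift !mxE.
Qed.

Lemma meval_coords_scale m p (c d : 'I_r -> C) X Y : multihom m p ->
  p.@[coords (fun l => c l *: X l) (fun l => d l *: Y l)] =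
  (\prod_l (c l * d l) ^+ m) * p.@[coords X Y].
Proof.
move=> p_hom.
pose cd := coords (fun l => const_mx (c l)) (fun l => const_mx (d l) : 'rV[C]_n).
have cdE k : coords (fun l => c l *: X l) (fun l => d l *: Y l) k = cd k * coords X Y k.
  rewrite /cd; move: k; apply: coords_index_ind => l a.
    by rewrite !coords_lshift !mxE.
  by rewrite !coords_rshift !mxE.
rewrite (meval_eq _ cdE) !mevalE big_distrr /=; apply: eq_big_seq => mon mon_p.
rewrite mulrCA; congr (_ * _); under eq_bigr do rewrite exprMn.
rewrite big_split /=; congr (_ * _).
rewrite (reindex _ (curry_mxvec_bij r (n + n))) /=.
transitivity (\prod_l \prod_(a < n + n) cd (mxvec_index l a) ^+ mon (mxvec_index l a)).
  by rewrite pair_bigA; apply: eq_bigr => -[].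
apply: eq_bigr => l _; rewrite big_split_ord /=.
 have [deg_X deg_Y] := p_hom mon mon_p l.
under eq_bigr => a _ do rewrite /cd coords_lshift mxE.
under [X in _ * X = _]eq_bigr => a _ do rewrite /cd coords_rshift mxE.
by rewrite !prodrXr deg_X deg_Y exprMn.
Qed.

End Coordinates.

Section HilbertMumford.
Variables (C : numClosedFieldType) (r n : nat) (S : pred 'I_r).

Definition weight (t : C) l := if S l then t else t^-1.

Lemma prod_weight m t : t != 0 ->
  (\prod_l (weight t l * weight t l) ^+ m) * t ^+ (2 * (m * #|predC S|)) =
  t ^+ (2 * (m * #|S|)).
Proof.
move=> t0; rewrite (bigID S) /=.
under eq_bigr => l Sl do rewrite /weight Sl.
under [X in _ * X * _]eq_bigr => l nSl do rewrite /weight (negbTE nSl).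
rewrite !prodr_const -!exprM !(exprM t 2) -invfM -expr2 exprVn -mulrA mulVf ?mulr1 //.
by rewrite !expf_neq0.
Qed.

(* Invariance along [g] gives p(x) t^(2m #|S^c|) = t^(2m #|S|) Q(t) for a
   polynomial Q, which forces p(x) = 0 when S is a majority. *)
Lemma SL_invariant_eval_eq0 m (p : {mpoly C[r * (n + n)]}) (g : C -> 'M[C]_n)
    (X Y A B D A' B' D' : 'I_r -> 'rV[C]_n) :
  (0 < m)%N -> multihom m p -> SL_invariant p -> (#|predC S| < #|S|)%N ->
  (forall t, t != 0 -> \det (g t) = 1) ->
  (forall t, t != 0 -> forall l,
     X l *m (g t)^T = weight t l *: (A l + t *: B l + t ^+ 2 *: D l)) ->
  (forall t, t != 0 -> forall l,
     Y l *m invmx (g t) = weight t l *: (A' l + t *: B' l + t ^+ 2 *: D' l)) ->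
  p.@[coords X Y] = 0.
Proof.
move=> m_gt0 p_hom p_inv S_big g_det gX gY.
pose Q := mmap polyC (fun k => (coords A A' k)%:P + (coords B B' k)%:P * 'X +
                               (coords D D' k)%:P * 'X^2) p.
set N1 := (2 * (m * #|predC S|))%N; set N2 := (2 * (m * #|S|))%N.
have N12 : (N1 < N2)%N by rewrite ltn_pmul2l // ltn_pmul2l.
have eval_t t : t != 0 -> p.@[coords X Y] * t ^+ N1 = t ^+ N2 * Q.[t].
  move=> t0; rewrite -(p_inv _ (g_det t t0)).
  rewrite (meval_eq _ (eq_coords (gX t t0) (gY t t0))) (meval_coords_scale _ _ _ _ p_hom).
  rewrite mulrAC prod_weight // horner_mmap_polyC; congr (_ * _); apply: meval_eq => k.
  by rewrite coords_poly2 !hornerD !hornerCM hornerC hornerX hornerXn; ring.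
have /(congr1 (fun q : {poly C} => q`_N1)) : p.@[coords X Y]%:P * 'X^N1 - 'X^N2 * Q = 0.
  by apply: poly_eq0_of_root_nz => t t0; rewrite !hornerE eval_t // subrr.
by rewrite coefB coefCM coefXn eqxx mulr1 coefXnM N12 subr0 coef0.
Qed.

End HilbertMumford.

Lemma laurent_expand (C : fieldType) n (x e f : 'rV[C]_n) (t a b : C) : t != 0 ->
  x + ((t - 1) * a) *: e + ((t^-1 - 1) * b) *: f =
  t^-1 *: (b *: f + t *: (x - a *: e - b *: f) + t ^+ 2 *: (a *: e)).
Proof. by move=> t0; apply/rowP => j; rewrite !mxE; field. Qed.

Section IsotropicTorus.
Variables (C : numClosedFieldType) (n : nat) (H : 'M[C]_n) (E u : 'rV[C]_n).
Hypotheses (EE : herm H E E = 0) (Eu : herm H E u = 1).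
Hypotheses (uE : herm H u E = 1) (uu : herm H u u = 0).

Let psi := hfun H u.
Let phi := hfun H E.

Let dotC (x y : 'rV[C]_n) : (x *m y^T) 0 0 = (y *m x^T) 0 0.
Proof. by rewrite -(trmxK (x *m y^T)) trmx_mul trmxK mxE. Qed.

Definition isotropic_torus (t : C) := hyperbolic_mx E u psi phi t t^-1.

Lemma det_isotropic_torus t : t != 0 -> \det (isotropic_torus t) = 1.
Proof. by move=> t0; rewrite det_hyperbolic_mx ?divff. Qed.

Lemma row_isotropic_torus t x : t != 0 ->
  x *m (isotropic_torus t)^T = t^-1 *: (herm H E x *: u +
    t *: (x - herm H u x *: E - herm H E x *: u) + t ^+ 2 *: (herm H u x *: E)).
Proof.
by move=> t0; rewrite row_hyperbolic_mx dotC [(x *m phi^T) 0 0]dotC laurent_expand.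
Qed.

Lemma row_isotropic_torus_line t a : t != 0 ->
  (a *: E) *m (isotropic_torus t)^T = t *: (a *: E).
Proof.
move=> t0; rewrite row_isotropic_torus // !hermZr EE uE mulr0 mulr1 scale0r.
by rewrite subr0 subrr scaler0 !add0r !scalerA expr2 -mulrA mulKf.
Qed.

Lemma col_isotropic_torus t x : t != 0 ->
  hfun H x *m invmx (isotropic_torus t) = t^-1 *: (herm H x E *: hfun H u +
    t *: (hfun H x - herm H x u *: hfun H E - herm H x E *: hfun H u) +
    t ^+ 2 *: (herm H x u *: hfun H E)).
Proof.
move=> t0; rewrite invmx_hyperbolic_mx ?invr_eq0 // invrK col_hyperbolic_mx //.
by rewrite addrAC laurent_expand.
Qed.

Lemma col_isotropic_torus_line t a : t != 0 ->
  hfun H (a *: E) *m invmx (isotropic_torus t) = t *: hfun H (a *: E).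
Proof.
move=> t0; rewrite col_isotropic_torus // !hermZl EE Eu mulr0 mulr1 scale0r.
have -> : hfun H (a *: E) = a^* *: hfun H E by rewrite /hfun map_mxZ -scalemxAl.
by rewrite subr0 subrr scaler0 !add0r !scalerA expr2 -mulrA mulKf.
Qed.

End IsotropicTorus.

Lemma semistable_double_card_class_le (C : numClosedFieldType) n (H : 'M[C]_n.+1) r
    (v : 'I_r -> 'rV[C]_n.+1) :
  is_hermitian H -> signature_n1_1 H -> (forall l, isotropic_line H (v l)) ->
  semistable H v -> forall l0, (#|[set l | (v l0 == v l)%MS]|.*2 <= r)%N.
Proof.
move=> hH sig iso [m [m_gt0 [p [p_hom [p_inv p_x]]]]] l0.
rewrite leqNgt; apply: contraNN p_x => S_big; apply/eqP.
have [_ EE] := iso l0; have [u [Eu uE uu]] := isotropic_hyperbolic_partner hH sig (iso l0).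
set E := v l0 in EE Eu uE uu S_big *; set S := [set l | (E == v l)%MS] in S_big *.
have S_line l : l \in S -> exists a, v l = a *: E by rewrite inE => /andP[_ /sub_rVP].
(* the class of [E] has weight [t] under [isotropic_torus], the others [t^-1] *)
pose A l := if l \in S then v l else herm H E (v l) *: u.
pose B l := if l \in S then 0 else v l - herm H u (v l) *: E - herm H E (v l) *: u.
pose D l := if l \in S then 0 else herm H u (v l) *: E.
pose A' l := if l \in S then hfun H (v l) else herm H (v l) E *: hfun H u.
pose B' l := if l \in S then 0
  else hfun H (v l) - herm H (v l) u *: hfun H E - herm H (v l) E *: hfun H u.
pose D' l := if l \in S then 0 else herm H (v l) u *: hfun H E.
apply: (@SL_invariant_eval_eq0 _ _ _ (fun l => l \in S) m p (isotropic_torus H E u) _ _ A B D A' B' D')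
  => // [| t t0 | t t0 l | t t0 l].
- have eqS : #|(fun l => l \in S)| = #|S| by apply: eq_card.
  have eqSC : #|predC (fun l => l \in S)| = #|~: S| by apply: eq_card => l; rewrite !inE.
  by have := cardsC S; rewrite eqS eqSC (card_ord r); lia.
- exact: det_isotropic_torus.
- rewrite /weight /A /B /D /=; case: ifP => [/S_line[a ->] | _].
    by rewrite row_isotropic_torus_line // !scaler0 !addr0.
  exact: row_isotropic_torus.
- rewrite /weight /A' /B' /D' /=; case: ifP => [/S_line[a ->] | _].
    by rewrite col_isotropic_torus_line // !scaler0 !addr0.
  exact: col_isotropic_torus.
Qed.

Theorem lemma4p24 (R : realType) (n : nat) (H : 'M[R[i]]_n.+1) (r : nat)
  (v : 'I_r -> 'rV[R[i]]_n.+1) :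
  (3 <= n.+1)%N -> is_hermitian H -> signature_n1_1 H ->
  (5 <= r)%N -> odd r ->
  (forall l, isotropic_line H (v l)) -> semistable H v ->
  exists k : 'I_r, forall i j : 'I_r,
    ~~ (v i == v j)%MS -> ~~ (v j == v k)%MS -> ~~ (v i == v k)%MS ->
    exists s : {perm 'I_r},
      [/\ derangement s,
          [/\ s i = j, s j = k & s k = i],
          (forall l, l \notin [:: i; j; k] -> s l != l /\ s (s l) = l)
        & s_sigma H v s != 0].
Proof.
move=> _ hH sig _ r_odd iso ss.
pose e : rel 'I_r := fun a b => (v a == v b)%MS.
have e_refl : reflexive e by move=> a; apply/eqmxP.
have e_ltrans : left_transitive e.
  move=> a b /eqmxP eab c; apply/eqmxP/eqmxP => h.
    exact: eqmx_trans (eqmx_sym eab) h.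
  exact: eqmx_trans eab h.
have class_small l : (#|eclass e [set: 'I_r] l|.*2 < #|'I_r|)%N.
  have -> : #|eclass e [set: 'I_r] l| = #|[set l' | (v l == v l')%MS]|.
    by apply: eq_card => l'; rewrite !inE.
  rewrite card_ord ltn_neqAle (semistable_double_card_class_le hH sig iso ss) andbT.
  by apply: contraTneq r_odd => <-; rewrite odd_double.
have r_odd' : odd #|'I_r| by rewrite card_ord.
have [k k_cycle] := ematching_three_cycle e_refl e_ltrans r_odd' class_small.
exists k => i j nij njk nik.
have [s [s_ijk s_inv s_sep]] := k_cycle i j nij njk nik.
have s_derange : derangement s.
  by move=> l; apply: contraNneq (s_sep l) => ->; apply: e_refl.
exists s; split=> // [l l_out | ]; first by split; [apply: s_derange | apply: s_inv].
apply/prodf_neq0 => l _; apply: contra (s_sep l) => /eqP.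
exact: isotropic_orth_eqmx hH sig (iso l) (iso (s l)).
Qed.
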